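(* Let $X$ be a nonempty set and $d:X\times X\to[0,\infty)$ a triangular symmetric on $X$. Let $(x_n;n\ge 0)$ be a sequence in $X$ which is $0d$-semi-Cauchy but not $0d$-Cauchy, and let $Q$ be a denumerable subset of $(0,\infty)$. Then there exist $\varepsilon\in(0,\infty)\setminus Q$, an index $j(\varepsilon)\in\mathbb{N}$, and two sequences of natural numbers $(m(j);j\ge 0)$, $(n(j);j\ge 0)$ such that: (i) $j\le m(j)<n(j)$ and $d(x_{m(j)},x_{n(j)})\ge\varepsilon$ for all $j\ge 0$; (ii) $n(j)-m(j)\ge 2$ and $d(x_{m(j)},x_{n(j)-1})<\varepsilon$ for all $j\ge j(\varepsilon)$; (iii) $\lim_{j\to\infty} d(x_{m(j)+p},x_{n(j)+q})=\varepsilon$ for all $p,q\in\{0,1\}$.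
   Context: A symmetric on $X$ is a map $d:X\times X\to[0,\infty)$ with $d(x,y)=d(y,x)$ for all $x,y\in X$. It is triangular if $d(x,z)\le d(x,y)+d(y,z)$ for all $x,y,z\in X$. A sequence $(x_n)$ in $X$ is $0d$-Cauchy if for every $\varepsilon>0$ there is $j$ such that $j\le m<n$ implies $d(x_m,x_n)<\varepsilon$; it is $0d$-semi-Cauchy if $d(x_n,x_{n+1})\to 0$ as $n\to\infty$. ''Denumerable'' means countable. *)

From Stdlib Require Import Reals.
Open Scope R_scope.

Definition symmetric_on {X : Type} (d : X -> X -> R) : Prop :=
  (forall x y, 0 <= d x y) /\ (forall x y, d x y = d y x).

Definition triangular {X : Type} (d : X -> X -> R) : Prop :=
  forall x y z, d x z <= d x y + d y z.

Definition zero_d_Cauchy {X : Type} (d : X -> X -> R) (x : nat -> X) : Prop :=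
  forall eps, 0 < eps -> exists j : nat,
    forall m n : nat, (j <= m)%nat -> (m < n)%nat -> d (x m) (x n) < eps.

Definition zero_d_semi_Cauchy {X : Type} (d : X -> X -> R) (x : nat -> X) : Prop :=
  Un_cv (fun n => d (x n) (x (S n))) 0.

(* denumerable = countable (finite or countably infinite):
   there is an injection of the subset into nat. *)
Definition countable_set (Q : R -> Prop) : Prop :=
  exists f : {q : R | Q q} -> nat, forall a b, f a = f b -> a = b.

From Stdlib Require Import Reals Lra Lia Classical ClassicalEpsilon.
Open Scope R_scope.

(* Since [x] is not Cauchy, some [e0 > 0] is exceeded by [d (x m) (x n)] with
   [m] arbitrarily large; a countable [Q] cannot fill [[e0/2, e0]], so we pick
   [eps] there outside [Q].  For each [j] take such a pair and let [n j] be the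
   first index after [m j] where the distance to [x (m j)] reaches [eps].  Then
   [eps <= d (x m) (x n) <= d (x m) (x (n-1)) + d (x (n-1)) (x n)
    < eps + d (x (n-1)) (x n)], and the last term tends to [0]; shifting either
   index by one changes the distance by at most one consecutive step, which
   also tends to [0]. *)

Definition trisect (a b y : R) : R * R :=
  if Rle_dec y ((a + b) / 2) then (a + 2 * (b - a) / 3, b)
  else (a, a + (b - a) / 3).

Lemma trisect_spec a b y : a < b ->
  a <= fst (trisect a b y) /\ fst (trisect a b y) < snd (trisect a b y) /\
  snd (trisect a b y) <= b /\ (y < fst (trisect a b y) \/ snd (trisect a b y) < y).
Proof.
  intros Hab; unfold trisect; destruct Rle_dec; simpl; lra.
Qed.

Fixpoint trisections (h : nat -> R) (a b : R) (n : nat) : R * R :=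
  match n with
  | O => (a, b)
  | S k => trisect (fst (trisections h a b k)) (snd (trisections h a b k)) (h k)
  end.

Section Trisections.

Variables (h : nat -> R) (a b : R).
Hypothesis Hab : a < b.

Notation lo n := (fst (trisections h a b n)).
Notation hi n := (snd (trisections h a b n)).

Lemma trisections_lt n : lo n < hi n.
Proof.
  induction n as [|n IH]; simpl; [lra|]. apply (trisect_spec _ _ (h n) IH).
Qed.

Lemma trisections_nested n k : (n <= k)%nat -> lo n <= lo k /\ hi k <= hi n.
Proof.
  induction 1 as [|k _ IH]; [lra|].
  pose proof (trisect_spec _ _ (h k) (trisections_lt k)); simpl; lra.
Qed.

Lemma trisections_lo_le_hi k n : lo k <= hi n.
Proof.
  destruct (trisections_nested k (max k n)) as [Hk _]; [lia|].
  destruct (trisections_nested n (max k n)) as [_ Hn]; [lia|].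
  pose proof (trisections_lt (max k n)); lra.
Qed.

Lemma exists_in_interval_not_in_range : exists c, a <= c <= b /\ forall n, h n <> c.
Proof.
  destruct (completeness (fun r => exists k, r = lo k)) as [c [Hub Hlub]].
  - exists b; intros r [k ->]. exact (trisections_lo_le_hi k 0).
  - exists a, 0%nat; reflexivity.
  - assert (Hin : forall n, lo n <= c <= hi n).
    { intro n; split.
      - apply Hub; exists n; reflexivity.
      - apply Hlub; intros r [k ->]; apply trisections_lo_le_hi. }
    exists c; split; [exact (Hin 0%nat)|].
    intros n E; pose proof (Hin (S n)); simpl in *.
    pose proof (trisect_spec _ _ (h n) (trisections_lt n)); lra.
Qed.

End Trisections.

Lemma countable_set_enumerated (Q : R -> Prop) : countable_set Q ->
  exists h : nat -> R, forall q, Q q -> exists n, h n = q.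
Proof.
  intros [f Hf].
  exists (fun n => match excluded_middle_informative (exists s, f s = n) with
           | left H => proj1_sig (proj1_sig (constructive_indefinite_description _ H))
           | right _ => 0
           end).
  intros q Hq; exists (f (exist _ q Hq)).
  destruct excluded_middle_informative as [H|H].
  - destruct (constructive_indefinite_description _ H) as [s Hs]; simpl.
    apply Hf in Hs; subst s; reflexivity.
  - exfalso; apply H; eexists; reflexivity.
Qed.

Lemma exists_in_interval_not_in_countable (Q : R -> Prop) a b :
  countable_set Q -> a < b -> exists c, a <= c <= b /\ ~ Q c.
Proof.
  intros HQ Hab.
  destruct (countable_set_enumerated Q HQ) as [h Hh].
  destruct (exists_in_interval_not_in_range h a b Hab) as [c [Hc Hnh]].
  exists c; split; [exact Hc|].
  intros Qc; destruct (Hh c Qc) as [n Hn]; exact (Hnh n Hn).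
Qed.

Lemma Un_cv_of_Rabs_le (u v : nat -> R) (l : R) (N : nat) :
  Un_cv v 0 -> (forall j, (N <= j)%nat -> Rabs (u j - l) <= v j) -> Un_cv u l.
Proof.
  intros Hv Hle e He.
  destruct (Hv e He) as [M HM].
  exists (max M N); intros j Hj; unfold Rdist in *.
  specialize (HM j ltac:(lia)); specialize (Hle j ltac:(lia)).
  rewrite Rminus_0_r in HM; pose proof (Rle_abs (v j)); lra.
Qed.

Lemma Un_cv_reindex_ge (u : nat -> R) (a : nat -> nat) (l : R) :
  Un_cv u l -> (forall j, (j <= a j)%nat) -> Un_cv (fun j => u (a j)) l.
Proof.
  intros Hu Ha e He; destruct (Hu e He) as [N HN].
  exists N; intros j Hj; apply HN; specialize (Ha j); lia.
Qed.

Lemma least_nat_witness (P : nat -> Prop) :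
  (exists n, P n) -> exists n, P n /\ forall k, (k < n)%nat -> ~ P k.
Proof.
  intros Hex.
  destruct (Wf_nat.dec_inh_nat_subset_has_unique_least_element P
              (fun n => classic (P n)) Hex) as [n [[Pn Hmin] _]].
  exists n; split; [exact Pn|].
  intros k Hk Pk; specialize (Hmin k Pk); lia.
Qed.

Section TriangularSymmetric.

Context {X : Type} (d : X -> X -> R).
Hypotheses (Hsym : symmetric_on d) (Htri : triangular d).

Lemma dist_diff_l a b c :
  Rabs (d a c - d b c) <= d a b.
Proof.
  destruct Hsym as [_ Hs].
  pose proof (Htri a b c); pose proof (Htri b a c); rewrite (Hs b a) in *.
  apply Rabs_le; lra.
Qed.

Lemma dist_diff_r a b c :
  Rabs (d c a - d c b) <= d a b.
Proof.
  rewrite ((proj2 Hsym) c a), ((proj2 Hsym) c b); exact (dist_diff_l a b c).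
Qed.

Variable x : nat -> X.

Lemma not_zero_d_Cauchy_witness : ~ zero_d_Cauchy d x ->
  exists e0, 0 < e0 /\
    forall j, exists m n, (j <= m)%nat /\ (m < n)%nat /\ e0 <= d (x m) (x n).
Proof.
  intros Hnc; apply NNPP; intros H; apply Hnc; intros e He.
  apply NNPP; intros H2; apply H; exists e; split; [exact He|]; intros j.
  apply NNPP; intros H3; apply H2; exists j; intros m n Hm Hn.
  apply Rnot_le_lt; intros H4; apply H3; eauto.
Qed.

Lemma zero_d_semi_Cauchy_eventually_lt eps : zero_d_semi_Cauchy d x -> 0 < eps ->
  exists N, forall k, (N <= k)%nat -> d (x k) (x (S k)) < eps.
Proof.
  intros Hsemi He; destruct (Hsemi eps He) as [N HN].
  exists N; intros k Hk; specialize (HN k Hk); unfold Rdist in HN.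
  rewrite Rminus_0_r in HN; pose proof (Rle_abs (d (x k) (x (S k)))); lra.
Qed.

Definition first_exit (eps : R) (m n : nat) : Prop :=
  (m < n)%nat /\ eps <= d (x m) (x n) /\
  forall k, (m < k < n)%nat -> d (x m) (x k) < eps.

Lemma first_exit_exists eps m n :
  (m < n)%nat -> eps <= d (x m) (x n) -> exists n', first_exit eps m n'.
Proof.
  intros Hmn Hn.
  destruct (least_nat_witness (fun k => (m < k)%nat /\ eps <= d (x m) (x k)))
    as [k [[Hmk Hk] Hmin]]; [eauto|].
  exists k; repeat split; auto.
  intros i Hi; apply Rnot_le_lt; intros Hle; apply (Hmin i); [lia|split; [lia|exact Hle]].
Qed.

Lemma first_exit_far eps m n : d (x m) (x (S m)) < eps -> first_exit eps m n ->
  (2 <= n - m)%nat /\ d (x m) (x (n - 1)) < eps.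
Proof.
  intros Hstep [Hmn [Hn Hbefore]].
  assert (n <> S m) by (intros ->; lra).
  split; [lia|]; apply Hbefore; lia.
Qed.

Lemma dist_shift_l a p z : (p <= 1)%nat ->
  Rabs (d (x (a + p)) z - d (x a) z) <= d (x a) (x (S a)).
Proof.
  intros Hp; destruct Hsym as [Hnn Hs].
  destruct p as [|[|]]; [|replace (a + 1)%nat with (S a) by lia|lia].
  - rewrite Nat.add_0_r, Rminus_diag, Rabs_R0; apply Hnn.
  - rewrite (Hs (x a) (x (S a))); apply dist_diff_l; assumption.
Qed.

Lemma dist_shift_r a q z : (q <= 1)%nat ->
  Rabs (d z (x (a + q)) - d z (x a)) <= d (x a) (x (S a)).
Proof.
  intros Hq; destruct Hsym as [Hnn Hs].
  destruct q as [|[|]]; [|replace (a + 1)%nat with (S a) by lia|lia].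
  - rewrite Nat.add_0_r, Rminus_diag, Rabs_R0; apply Hnn.
  - rewrite (Hs (x a) (x (S a))); apply dist_diff_r; assumption.
Qed.

Lemma first_exit_overshoot eps m n : first_exit eps m n ->
  d (x m) (x (n - 1)) < eps -> Rabs (d (x m) (x n) - eps) <= d (x (n - 1)) (x n).
Proof.
  intros [Hmn [Hn _]] Hlast.
  pose proof (Htri (x m) (x (n - 1)) (x n)); apply Rabs_le; lra.
Qed.

Lemma first_exit_shift_bound eps m n p q :
  (p <= 1)%nat -> (q <= 1)%nat -> first_exit eps m n -> d (x m) (x (n - 1)) < eps ->
  Rabs (d (x (m + p)) (x (n + q)) - eps) <=
    d (x m) (x (S m)) + d (x (n - 1)) (x (S (n - 1))) + d (x n) (x (S n)).
Proof.
  intros Hp Hq Hexit Hlast.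
  pose proof (first_exit_overshoot eps m n Hexit Hlast) as Hover.
  destruct Hexit as [Hmn _].
  replace (S (n - 1)) with n by lia.
  pose proof (dist_shift_l m p (x (n + q)) Hp).
  pose proof (dist_shift_r n q (x m) Hq).
  set (A := d (x (m + p)) (x (n + q))) in *; set (B := d (x m) (x (n + q))) in *;
    set (C := d (x m) (x n)) in *.
  replace (A - eps) with ((A - B) + (B - C) + (C - eps)) by ring.
  pose proof (Rabs_triang (A - B + (B - C)) (C - eps)).
  pose proof (Rabs_triang (A - B) (B - C)); lra.
Qed.

End TriangularSymmetric.

Theorem lemma1 (X : Type) (x0 : X) (d : X -> X -> R)
  (Hsym : symmetric_on d) (Htri : triangular d)
  (x : nat -> X)
  (Hsemi : zero_d_semi_Cauchy d x) (Hnc : ~ zero_d_Cauchy d x)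
  (Q : R -> Prop) (HQpos : forall q, Q q -> 0 < q) (HQc : countable_set Q) :
  exists (eps : R) (jeps : nat) (m n : nat -> nat),
    0 < eps /\ ~ Q eps /\
    (forall j, (j <= m j)%nat /\ (m j < n j)%nat /\ eps <= d (x (m j)) (x (n j))) /\
    (forall j, (jeps <= j)%nat ->
        (2 <= n j - m j)%nat /\ d (x (m j)) (x (n j - 1)%nat) < eps) /\
    (forall p q : nat, (p <= 1)%nat -> (q <= 1)%nat ->
        Un_cv (fun j => d (x (m j + p)%nat) (x (n j + q)%nat)) eps).
Proof.
  destruct (not_zero_d_Cauchy_witness d x Hnc) as [e0 [He0 Hfar]].
  destruct (exists_in_interval_not_in_countable Q (e0 / 2) e0 HQc ltac:(lra))
    as [eps [Heps HnQ]].
  assert (Hexits : forall j, exists mn : nat * nat,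
             (j <= fst mn)%nat /\ first_exit d x eps (fst mn) (snd mn)).
  { intros j; destruct (Hfar j) as [m [n [Hjm [Hmn Hn]]]].
    destruct (first_exit_exists d x eps m n Hmn ltac:(lra)) as [n' Hn'].
    exists (m, n'); split; [exact Hjm|exact Hn']. }
  destruct (choice _ Hexits) as [mn Hmn].
  destruct (zero_d_semi_Cauchy_eventually_lt d x eps Hsemi ltac:(lra)) as [N HN].
  assert (Hfar_exit : forall j, (N <= j)%nat -> (2 <= snd (mn j) - fst (mn j))%nat /\
             d (x (fst (mn j))) (x (snd (mn j) - 1)%nat) < eps).
  { intros j Hj; destruct (Hmn j) as [Hjm Hexit].
    apply (first_exit_far d x eps); [apply HN; lia|exact Hexit]. }
  exists eps, N, (fun j => fst (mn j)), (fun j => snd (mn j)).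
  split; [lra|]. split; [exact HnQ|]. split; [|split; [exact Hfar_exit|]].
  { intros j; destruct (Hmn j) as [? [? [? _]]]; auto. }
  intros p q Hp Hq.
  set (step k := d (x k) (x (S k))).
  apply (Un_cv_of_Rabs_le _
           (fun j => step (fst (mn j)) + step (snd (mn j) - 1)%nat + step (snd (mn j))) _ N).
  - replace 0 with (0 + 0 + 0) by lra.
    repeat apply CV_plus; apply Un_cv_reindex_ge; try exact Hsemi;
      intros j; destruct (Hmn j) as [? [? _]]; lia.
  - intros j Hj.
    apply (first_exit_shift_bound d Hsym Htri x eps); [exact Hp|exact Hq|apply Hmn|].
    apply Hfar_exit, Hj.
Qed.
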